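(* Let $\mathcal D=(G,d,(D_\lambda)_{\lambda>0},\Gamma,V)$ be a homogeneous dilation datum whose underlying RAHOGRASP $(G,A)$ is $2$-step nilpotent and endowed with a canonical homogeneous structure. Then for every non-periodic primitive substitution datum $(\mathcal A,\lambda_0,S_0)$ over $\mathcal D$, the associated substitution system $\Omega(S)$ is strongly aperiodic, i.e. every $\omega\in\Omega(S)$ has trivial $\Gamma$-stabilizer.
   Context: Dilation datum $(G,d,(D_\lambda),\Gamma,V)$: $G$ connected lcsc group, $d$ left-invariant metric inducing the topology, $\lambda\mapsto D_\lambda$ homomorphism $(\mathbb R_{>0},\cdot)\to\mathrm{Aut}(G)$ with $d(D_\lambda g,D_\lambda h)=\lambda d(g,h)$; $\Gamma$ uniform lattice with $D_\lambda(\Gamma)\subset\Gamma$ for some $\lambda>1$; $V$ bounded Borel, containing an open identity neighbourhood, with $G=\bigsqcup_{\gamma\in\Gamma}\gamma V$. Substitution datum $(\mathcal A,\lambda_0,S_0)$: finite $\mathcal A$; $\lambda_0>1+r_+/r_-$ for some $0<r_-<r_+$ with $B(e,r_-)\subset V\subset B(e,r_+)$; $D:=D_{\lambda_0}$ with $D(\Gamma)\subset\Gamma$; $S_0:\mathcal A\to\mathcal A^{D(V)\cap\Gamma}$. Patches: elements of $\mathcal A^M$, $M\subset\Gamma$; $P_a$ has support $\{e\}$, value $a$; $(\gamma P)(x)=P(\gamma^{-1}x)$; $P|_M$ restriction to $\mathrm{supp}P\cap M$; $P\prec Q$ iff $P=\gamma(Q|_M)$ for some $\gamma,M$. Substitution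 map: $\mathrm{supp}S(P)=D(\mathrm{supp}(P)V)\cap\Gamma$, $S(P)(\gamma)=S_0(P(\eta))(D(\eta)^{-1}\gamma)$ for the unique $\eta\in\mathrm{supp}P$ with $\gamma\in D(\eta)(D(V)\cap\Gamma)$. $\Omega(S)$: all $\omega\in\mathcal A^\Gamma$ whose finite restrictions $P$ satisfy $P\prec S^n(P_a)$ for some $n,a$. Primitive: $\exists L$ with $P_a\prec S^L(P_b)$ for all $a,b$. Non-periodic: $S_0$ injective and $(\gamma^{-1}S(P_a))|_{\gamma^{-1}D(V)\cap D(V)}\ne S(P_b)|_{\gamma^{-1}D(V)\cap D(V)}$ for all $\gamma\in(D(V)\cap\Gamma)\setminus\{e\}$, $a,b$. RAHOGRASP, dilation family, homogeneous metric, adapted lattice, $\times_\beta$ and homogeneous dilation datum: $(G,A)$ with $G$ connected simply connected nilpotent Lie group, $A$ an $\mathbb R$-diagonalizable automorphism of $\mathfrak g$ with positive rational eigenvalues whose eigenspaces are defined over a rational form $\mathfrak g_{\mathbb Q}$; $D_\lambda=\exp\circ T_\lambda\circ\log$ with $T_\lambda=\lambda^\alpha$ on the $\alpha$-eigenspace; $\rho(A)$ the top eigenvalue; $d(g,h)=\|g^{-1}h\|$ for a homogeneous norm ($\|g\|=0\iff g=e$, $\|g^{-1}\|=\|g\|$, $\|D_\lambda g\|=\lambda\|g\|$, subadditive, continuous); $\Gamma$ generated by $\exp$ of a basis of $\mathfrak g_{\mathbb Q}$ of $A$-eigenvectors with integer structure constants divisible by all BCH denominators; the datum is homogeneous if additionally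 $G\cong G_H\times_\beta\mathbb R^m$ (product $(g,x)(h,y)=(gh,x+y+\beta(g,h))$, $\beta$ smooth normalized cocycle, $G_H\ne\{e\}$ with dilation family $D^H_\lambda$) with $D_\lambda(g_H,v)=(D^H_\lambda g_H,\lambda^{\rho(A)}v)$, $\Gamma=\Gamma_H\times_\beta\Gamma_0$, $V=V_H\times_\beta V_0$ ($V_H,V_0$ convenient fundamental domains for lattices $\Gamma_H<G_H,\Gamma_0<\mathbb R^m$), and $\bigcap_{x\in F_V}(x+F_V)\ne\emptyset$ for $F_V=\lambda_0^{\rho(A)}V_0\cap\Gamma_0$ whenever $\lambda_0>1$, $D_{\lambda_0}(\Gamma)\subset\Gamma$, $\lambda_0^{\rho(A)}>1$. Canonical homogeneous structure: for $G$ $2$-step nilpotent with rational form $\mathfrak g_{\mathbb Q}$, choose a $\mathbb Q$-complement $\mathfrak g_{1,\mathbb Q}$ of $[\mathfrak g_{\mathbb Q},\mathfrak g_{\mathbb Q}]$; $A$ acts by $1$ on $\mathfrak g_{1,\mathbb Q}\otimes\mathbb R$ and by $2$ on $[\mathfrak g,\mathfrak g]$. *)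

From HB Require Import structures.
From mathcomp Require Import all_boot all_order all_algebra.
From mathcomp Require Import all_classical all_reals all_analysis.
Set Implicit Arguments. Unset Strict Implicit. Unset Printing Implicit Defensive.
Import Order.TTheory GRing.Theory Num.Theory.
Import numFieldNormedType.Exports.
Local Open Scope classical_set_scope.
Local Open Scope ring_scope.

(* Simply connected nilpotent Lie groups of step <= 2, in exponential        *)
(* coordinates with respect to a fixed basis (e_i) of the Lie algebra:       *)
(* the Lie algebra is R^n with bracket [e_i,e_j] = sum_k c i j k e_k, and    *)
(* (BCH for step <= 2) the group law is x*y = x + y + 1/2 [x,y].            *)

Definition lbr {R : numFieldType} {n : nat} (c : 'I_n -> 'I_n -> 'I_n -> R)
  (x y : 'rV[R]_n) : 'rV[R]_n :=
  \row_k \sum_(i < n) \sum_(j < n) x 0 i * y 0 j * c i j k.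

Definition gmul {R : numFieldType} {n : nat} (c : 'I_n -> 'I_n -> 'I_n -> R)
  (x y : 'rV[R]_n) : 'rV[R]_n := x + y + 2^-1 *: lbr c x y.

Definition ginv {R : numFieldType} {n : nat} (x : 'rV[R]_n) : 'rV[R]_n := - x.

(* structure constants of a Lie algebra of nilpotency step <= 2:           *)
(* antisymmetry, and [[e_i,e_j],e_l] = 0 (Jacobi then holds trivially)      *)
Definition lie_step_le2 {K : pzRingType} {n : nat} (c : 'I_n -> 'I_n -> 'I_n -> K) :=
  (forall i j k, c i j k = - c j i k) /\
  (forall i j l p, \sum_(k < n) c i j k * c k l p = 0).

Definition cR {R : numFieldType} {n : nat} (c : 'I_n -> 'I_n -> 'I_n -> int) :=
  fun i j k => (c i j k)%:~R : R.

(* ---- The RAHOGRASP (G,A): G 2-step nilpotent, canonical homogeneous     *)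
(* structure, in exp-coordinates w.r.t. the basis (e_i) of g_Q generating    *)
(* the adapted lattice.  w i is the A-eigenvalue of e_i.                     *)
Definition canonical_2step_adapted {n : nat} (c : 'I_n -> 'I_n -> 'I_n -> int)
  (w : 'I_n -> nat) : Prop :=
  [/\ lie_step_le2 c,
      (exists i j k, c i j k != 0),
      (* integer structure constants divisible by all BCH denominators (= 2) *)
      (forall i j k, (2 %| c i j k)%Z),
      (* eigenvalues: 1 on g_1 = span{e_k | w k = 1}, 2 on [g,g]            *)
      (forall k, w k = 1%N \/ w k = 2%N) &
      (* [g,g] = span{e_k | w k = 2} (g_1,Q is then a Q-complement) *)
      ((forall i j k, c i j k != 0 -> w k = 2%N) /\
       (forall k, w k = 2%N -> exists a : 'I_n -> 'I_n -> rat,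
          forall l, \sum_(i < n) \sum_(j < n) a i j * (c i j l)%:~R = (k == l)%:R))].

Definition rhoA {n : nat} (w : 'I_n -> nat) : nat := \max_(i < n) w i.

(* dilation family D_lambda = exp o T_lambda o log *)
Definition dil {R : realType} {n : nat} (w : 'I_n -> nat) (l : R) (x : 'rV[R]_n)
  : 'rV[R]_n := \row_i (l ^+ w i * x 0 i).

Definition qdil {R : realType} {n : nat} (w : 'I_n -> rat) (l : R) (x : 'rV[R]_n)
  : 'rV[R]_n := \row_i (l `^ (ratr (w i)) * x 0 i).

Definition gen_subgroup {T : Type} (mul : T -> T -> T) (inv : T -> T) (e : T)
  (S : set T) : set T :=
  fun g => forall P : set T, S `<=` P -> P e ->
    (forall x y, P x -> P y -> P (mul x y)) -> (forall x, P x -> P (inv x)) -> P g.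

Definition is_subgroup {T : Type} (mul : T -> T -> T) (inv : T -> T) (e : T)
  (H : set T) : Prop :=
  [/\ H e, (forall x y, H x -> H y -> H (mul x y)) & (forall x, H x -> H (inv x))].

(* the adapted lattice: generated by exp(e_i) *)
Definition Gam {R : realType} {n : nat} (c : 'I_n -> 'I_n -> 'I_n -> int)
  : set 'rV[R]_n :=
  gen_subgroup (gmul (cR c)) ginv 0 [set delta_mx 0 i | i in [set: 'I_n]].

Definition homog_norm {R : realType} {n : nat} (c : 'I_n -> 'I_n -> 'I_n -> int)
  (w : 'I_n -> nat) (N : 'rV[R]_n -> R) : Prop :=
  [/\ (forall x, N x = 0 <-> x = 0),
      (forall x, N (ginv x) = N x),
      (forall l x, 0 < l -> N (dil w l x) = l * N x),
      (forall x y, N (gmul (cR c) x y) <= N x + N y) &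
      continuous N].

Definition hdist {R : realType} {n : nat} (c : 'I_n -> 'I_n -> 'I_n -> int)
  (N : 'rV[R]_n -> R) (g h : 'rV[R]_n) : R := N (gmul (cR c) (ginv g) h).

Definition hball {R : realType} {n : nat} (c : 'I_n -> 'I_n -> 'I_n -> int)
  (N : 'rV[R]_n -> R) (r : R) : set 'rV[R]_n := [set g | hdist c N 0 g < r].

Definition datum_domain {R : realType} {n : nat} (c : 'I_n -> 'I_n -> 'I_n -> int)
  (N : 'rV[R]_n -> R) (V : set 'rV[R]_n) : Prop :=
  [/\ (exists r : R, V `<=` hball c N r),
      <<s open >> V,
      (exists U : set 'rV[R]_n, open U /\ U 0 /\ U `<=` V) &
      (forall g, exists! gam, Gam c gam /\ V (gmul (cR c) (ginv gam) g))].

Definition is_lattice {R : realType} {T : normedModType R}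
  (mul : T -> T -> T) (inv : T -> T) (e : T) (L : set T) : Prop :=
  [/\ is_subgroup mul inv e L,
      (exists U : set T, open U /\ U e /\ U `&` L `<=` [set e]) &
      (exists K : set T, compact K /\ forall g, exists2 gam, L gam & K (mul (inv gam) g))].

Definition convenient_fd {R : realType} {T : normedModType R}
  (mul : T -> T -> T) (inv : T -> T) (e : T) (L : set T) (W : set T) : Prop :=
  [/\ bounded_set W,
      <<s open >> W,
      (exists U : set T, open U /\ U e /\ U `<=` W) &
      (forall g, exists! gam, L gam /\ W (mul (inv gam) g))].

Fixpoint iterD {R : realType} {U W : normedModType R} (vs : seq U) (f : U -> W)
  : U -> W :=
  match vs with
  | [::] => f
  | v :: vs' => 'D_v (iterD vs' f)
  end.

Definition smooth {R : realType} {U W : normedModType R} (f : U -> W) : Prop :=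
  forall vs : seq U, continuous (iterD vs f) /\
    forall x v, derivable (iterD vs f) x v.

Definition bmul {R : realType} {k m : nat} (mulH : 'rV[R]_k -> 'rV[R]_k -> 'rV[R]_k)
  (beta : 'rV[R]_k -> 'rV[R]_k -> 'rV[R]_m) (p q : 'rV[R]_k * 'rV[R]_m)
  : 'rV[R]_k * 'rV[R]_m := (mulH p.1 q.1, p.2 + q.2 + beta p.1 q.1).

Definition homogeneous_datum {R : realType} {n : nat}
  (c : 'I_n -> 'I_n -> 'I_n -> int) (w : 'I_n -> nat) (V : set 'rV[R]_n) : Prop :=
  exists (k m : nat) (cH : 'I_k -> 'I_k -> 'I_k -> rat) (wH : 'I_k -> rat)
    (beta : 'rV[R]_k -> 'rV[R]_k -> 'rV[R]_m)
    (phi : 'rV[R]_n -> 'rV[R]_k * 'rV[R]_m) (psi : 'rV[R]_k * 'rV[R]_m -> 'rV[R]_n)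
    (GH VH : set 'rV[R]_k) (G0 V0 : set 'rV[R]_m),
  let mulH := gmul (fun i j l => ratr (cH i j l) : R) in
  [/\
   (* G_H <> {e}, a RAHOGRASP (step <= 2, rational structure constants in a   *)
   (* rational A_H-eigenbasis, positive rational eigenvalues wH)             *)
   [/\ (0 < k)%N, lie_step_le2 cH, (forall i, 0 < wH i) &
       (forall i j l, cH i j l != 0 -> wH l = wH i + wH j)],
   [/\ (forall g, beta 0 g = 0 /\ beta g 0 = 0),
       (forall g h q, beta g h + beta (mulH g h) q = beta h q + beta g (mulH h q)) &
       smooth (fun z : 'rV[R]_(k + k) => beta (lsubmx z) (rsubmx z))],
   [/\ cancel phi psi, cancel psi phi, continuous phi, continuous psi &
       (forall x y, phi (gmul (cR c) x y) = bmul mulH beta (phi x) (phi y))],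
   [/\ (forall (l : R) x, 0 < l ->
          phi (dil w l x) = (qdil wH l (phi x).1, l ^+ rhoA w *: (phi x).2)),
       (forall x, Gam c x <-> (GH (phi x).1 /\ G0 (phi x).2)) &
       (forall x, V x <-> (VH (phi x).1 /\ V0 (phi x).2))] /\
   [/\ is_lattice mulH ginv 0 GH, is_lattice +%R -%R 0 G0,
       convenient_fd mulH ginv 0 GH VH & convenient_fd +%R -%R 0 G0 V0] &
   (forall l : R, 1 < l -> (forall g, Gam c g -> Gam c (dil w l g)) ->
      1 < l ^+ rhoA w ->
      let FV := [set v | G0 v /\ exists2 u, V0 u & v = l ^+ rhoA w *: u] in
      exists y, forall x, FV x -> FV (y - x))].

(* A patchT (element of A^M, M a subset of Gamma) is a partial function; its  *)
(* support is the set of points where it is defined.                         *)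
Definition patchT (R : realType) (n : nat) (A : Type) := 'rV[R]_n -> option A.

Definition Pa {R : realType} {n : nat} {A : Type} (a : A) : patchT R n A :=
  fun x => if x == 0 then Some a else None.

Definition ptrans {R : realType} {n : nat} {A : Type}
  (c : 'I_n -> 'I_n -> 'I_n -> int) (g : 'rV[R]_n) (P : patchT R n A) : patchT R n A :=
  fun x => P (gmul (cR c) (ginv g) x).

Definition prestr {R : realType} {n : nat} {A : Type} (P : patchT R n A)
  (M : set 'rV[R]_n) : patchT R n A :=
  fun x => if `[< M x >] then P x else None.

Definition pprec {R : realType} {n : nat} {A : Type}
  (c : 'I_n -> 'I_n -> 'I_n -> int) (P Q : patchT R n A) : Prop :=
  exists gam M, Gam c gam /\ P = ptrans c gam (prestr Q M).

Definition DV {R : realType} {n : nat} (w : 'I_n -> nat) (l0 : R)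
  (V : set 'rV[R]_n) : set 'rV[R]_n := dil w l0 @` V.

Definition subst_datum {R : realType} {n : nat} {A : finType}
  (c : 'I_n -> 'I_n -> 'I_n -> int) (w : 'I_n -> nat) (N : 'rV[R]_n -> R)
  (V : set 'rV[R]_n) (l0 : R) (S0 : A -> patchT R n A) : Prop :=
  [/\ (exists rm rp : R, [/\ 0 < rm, rm < rp, hball c N rm `<=` V,
          V `<=` hball c N rp & 1 + rp / rm < l0]),
      (forall g, Gam c g -> Gam c (dil w l0 g)) &
      (forall a y, S0 a y <> None <-> (Gam c y /\ DV w l0 V y))].

Definition subst {R : realType} {n : nat} {A : Type}
  (c : 'I_n -> 'I_n -> 'I_n -> int) (w : 'I_n -> nat) (V : set 'rV[R]_n) (l0 : R)
  (S0 : A -> patchT R n A) (P : patchT R n A) : patchT R n A :=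
  fun x =>
    match pselect (exists eta, P eta <> None /\
         (Gam c (gmul (cR c) (ginv (dil w l0 eta)) x) /\
          DV w l0 V (gmul (cR c) (ginv (dil w l0 eta)) x))) with
    | left H => let eta := projT1 (cid H) in
        match P eta with
        | Some a => S0 a (gmul (cR c) (ginv (dil w l0 eta)) x)
        | None => None
        end
    | right _ => None
    end.

Definition Omega {R : realType} {n : nat} {A : Type}
  (c : 'I_n -> 'I_n -> 'I_n -> int) (w : 'I_n -> nat) (V : set 'rV[R]_n) (l0 : R)
  (S0 : A -> patchT R n A) : set (patchT R n A) :=
  [set om | (forall x, om x <> None <-> Gam c x) /\
     forall M : set 'rV[R]_n, finite_set M ->
       exists (k : nat) (a : A),
         pprec c (prestr om M) (iter k (subst c w V l0 S0) (Pa a))].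

Definition primitive {R : realType} {n : nat} {A : Type}
  (c : 'I_n -> 'I_n -> 'I_n -> int) (w : 'I_n -> nat) (V : set 'rV[R]_n) (l0 : R)
  (S0 : A -> patchT R n A) : Prop :=
  exists L : nat, forall a b : A,
    pprec c (Pa a) (iter L (subst c w V l0 S0) (Pa b)).

Definition non_periodic {R : realType} {n : nat} {A : Type}
  (c : 'I_n -> 'I_n -> 'I_n -> int) (w : 'I_n -> nat) (V : set 'rV[R]_n) (l0 : R)
  (S0 : A -> patchT R n A) : Prop :=
  injective S0 /\
  forall g, Gam c g -> DV w l0 V g -> g <> 0 -> forall a b : A,
    let W := [set x | DV w l0 V (gmul (cR c) g x) /\ DV w l0 V x] in
    prestr (ptrans c (ginv g) (subst c w V l0 S0 (Pa a))) W
      <> prestr (subst c w V l0 S0 (Pa b)) W.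

Definition strongly_aperiodic {R : realType} {n : nat} {A : Type}
  (c : 'I_n -> 'I_n -> 'I_n -> int) (X : set (patchT R n A)) : Prop :=
  forall om, X om -> forall g, Gam c g -> ptrans c g om = om -> g = 0.

From HB Require Import structures.
From mathcomp Require Import all_boot all_order all_algebra.
From mathcomp Require Import all_classical all_reals all_analysis.
From mathcomp Require Import ring lra.
Set Implicit Arguments. Unset Strict Implicit. Unset Printing Implicit Defensive.
Import Order.TTheory GRing.Theory Num.Theory.
Import numFieldNormedType.Exports.
Local Open Scope classical_set_scope.
Local Open Scope ring_scope.

(* Suppose gam != 0 is a period of om in Omega(S).  By local finiteness om
   agrees on a large ball with a translate of a supertile S^m(P_a), which
   therefore has a local period conjugate to gam.  Non-periodicity makes the
   substitution recognizable: a local period of S(P) on a ball of radius r is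
   the dilate D(d') of a local period d' of P on a ball of radius about r/l0.
   Following the conjugate h of the period through this descent, D(h') is a
   conjugate of h by an element of norm < l0 rp; for the canonical grading of
   a 2-step group this changes h only in the central (weight-two) coordinates,
   and keeps N h bounded.  So the weight-one coordinates of h are those of gam
   divided by l0^i; being integers they vanish after finitely many steps, after
   which h is central, its norm is divided by l0 at each step, and it
   eventually lies in the ball of radius rm, forcing h = 0.  If the supertile
   is exhausted first, P_a itself has the period h, again forcing h = 0. *)

Section TwoStepGroup.
Variables (R : numFieldType) (n : nat) (c : 'I_n -> 'I_n -> 'I_n -> R).
Hypothesis hc : lie_step_le2 c.

Local Notation G := 'rV[R]_n.
Local Notation br := (lbr c).
Local Notation mul := (gmul c).

Lemma lbrE (x y : G) k :
  br x y 0 k = \sum_(i < n) \sum_(j < n) x 0 i * y 0 j * c i j k.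
Proof. by rewrite mxE. Qed.

Lemma lbrDl (x y z : G) : br (x + y) z = br x z + br y z.
Proof.
apply/rowP => k; rewrite !mxE -big_split /=; apply: eq_bigr => i _.
rewrite -big_split /=; apply: eq_bigr => j _; rewrite !mxE; ring.
Qed.

Lemma lbrDr (x y z : G) : br x (y + z) = br x y + br x z.
Proof.
apply/rowP => k; rewrite !mxE -big_split /=; apply: eq_bigr => i _.
rewrite -big_split /=; apply: eq_bigr => j _; rewrite !mxE; ring.
Qed.

Lemma lbrZl a (x y : G) : br (a *: x) y = a *: br x y.
Proof.
apply/rowP => k; rewrite !mxE mulr_sumr; apply: eq_bigr => i _.
rewrite mulr_sumr; apply: eq_bigr => j _; rewrite !mxE; ring.
Qed.

Lemma lbrZr a (x y : G) : br x (a *: y) = a *: br x y.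
Proof.
apply/rowP => k; rewrite !mxE mulr_sumr; apply: eq_bigr => i _.
rewrite mulr_sumr; apply: eq_bigr => j _; rewrite !mxE; ring.
Qed.

Lemma lbrNl (x y : G) : br (- x) y = - br x y.
Proof. by rewrite -scaleN1r lbrZl scaleN1r. Qed.

Lemma lbrNr (x y : G) : br x (- y) = - br x y.
Proof. by rewrite -scaleN1r lbrZr scaleN1r. Qed.

Lemma lbr0l (y : G) : br 0 y = 0.
Proof. by apply: (addrI (br 0 y)); rewrite addr0 -lbrDl addr0. Qed.

Lemma lbr0r (y : G) : br y 0 = 0.
Proof. by apply: (addrI (br y 0)); rewrite addr0 -lbrDr addr0. Qed.

Lemma lbrC (x y : G) : br y x = - br x y.
Proof.
apply/rowP => k; rewrite !mxE -sumrN exchange_big /=; apply: eq_bigr => i _.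
rewrite -sumrN; apply: eq_bigr => j _; rewrite hc.1; ring.
Qed.

Lemma lbrxx (x : G) : br x x = 0.
Proof.
have : (2 : R) *: br x x = 0 by rewrite scaler_nat mulr2n {1}lbrC addNr.
by move/eqP; rewrite scaler_eq0 pnatr_eq0 => /eqP.
Qed.

Lemma lbr_lbrl (x y z : G) : br (br x y) z = 0.
Proof.
apply/rowP => p; rewrite !mxE exchange_big /= big1 // => m _.
rewrite (eq_bigr (fun l => z 0 m * (br x y 0 l * c l m p))); last by move=> l _; ring.
rewrite -mulr_sumr; under eq_bigr => l _ do rewrite lbrE mulr_suml.
rewrite exchange_big /= big1 ?mulr0 // => i _.
under eq_bigr => l _ do rewrite mulr_suml.
rewrite exchange_big /= big1 // => j _.
under eq_bigr => l _ do rewrite -mulrA.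
by rewrite -mulr_sumr hc.2 mulr0.
Qed.

Lemma lbr_lbrr (x y z : G) : br z (br x y) = 0.
Proof. by rewrite lbrC lbr_lbrl oppr0. Qed.

Lemma gmul0g (x : G) : mul 0 x = x.
Proof. by rewrite /gmul lbr0l scaler0 add0r addr0. Qed.

Lemma gmulg0 (x : G) : mul x 0 = x.
Proof. by rewrite /gmul lbr0r scaler0 !addr0. Qed.

Lemma gmulNg (x : G) : mul (- x) x = 0.
Proof. by rewrite /gmul lbrNl lbrxx oppr0 scaler0 addr0 addNr. Qed.

Lemma gmulgN (x : G) : mul x (- x) = 0.
Proof. by rewrite /gmul lbrNr lbrxx oppr0 scaler0 addr0 addrN. Qed.

Lemma gmulA (x y z : G) : mul (mul x y) z = mul x (mul y z).
Proof.
rewrite /gmul !lbrDl !lbrDr !lbrZl !lbrZr lbr_lbrl lbr_lbrr !scaler0.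
apply/rowP => k; rewrite !mxE; ring.
Qed.

Lemma gmulKg (x y : G) : mul (- x) (mul x y) = y.
Proof. by rewrite -gmulA gmulNg gmul0g. Qed.

Lemma gmulNKg (x y : G) : mul x (mul (- x) y) = y.
Proof. by rewrite -gmulA gmulgN gmul0g. Qed.

Lemma gmulgK (x y : G) : mul (mul y x) (- x) = y.
Proof. by rewrite gmulA gmulgN gmulg0. Qed.

Lemma opp_gmul (x y : G) : - mul x y = mul (- y) (- x).
Proof.
rewrite /gmul lbrNl lbrNr opprK (lbrC x y).
apply/rowP => k; rewrite !mxE; ring.
Qed.

Lemma gmulI (x y z : G) : mul x y = mul x z -> y = z.
Proof. by move=> h; rewrite -(gmulKg x y) h gmulKg. Qed.

Lemma gmulIg (x y z : G) : mul y x = mul z x -> y = z.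
Proof. by move=> h; rewrite -(gmulgK x y) h gmulgK. Qed.

Lemma gconjE (h v : G) : mul (- v) (mul h v) = h + br h v.
Proof.
rewrite /gmul lbrNl !lbrDr lbrZr lbr_lbrr (lbrC v h) lbrxx scaler0.
apply/rowP => k; rewrite !mxE; by field.
Qed.

End TwoStepGroup.

Lemma lie_step_le2_cR (R : numFieldType) n (c : 'I_n -> 'I_n -> 'I_n -> int) :
  lie_step_le2 c -> lie_step_le2 (cR c : 'I_n -> 'I_n -> 'I_n -> R).
Proof.
move=> [hanti hstep]; split=> [i j k | i j l p]; first by rewrite /cR hanti mulrNz.
transitivity ((\sum_(k < n) c i j k * c k l p)%:~R : R); last by rewrite hstep.
by rewrite rmorph_sum; apply: eq_bigr => k _; rewrite rmorphM.
Qed.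

Section CanonicalStructure.
Variables (n : nat) (c : 'I_n -> 'I_n -> 'I_n -> int) (w : 'I_n -> nat).
Hypothesis hcan : canonical_2step_adapted c w.

(* [e_i, -] vanishes for e_i in [g,g] = span (e_k | w k = 2): write e_i as a
   rational combination of brackets and use the step-2 identity. *)
Lemma canonical_derived_central i j k : w i = 2%N -> c i j k = 0.
Proof.
case: hcan => hc _ _ _ [_ hspan] wi; have [a ha] := hspan i wi.
apply/eqP; rewrite -(intr_eq0 rat); apply/eqP.
transitivity (\sum_(l < n) (i == l)%:R * (c l j k)%:~R : rat).
  rewrite (bigD1 i) //= eqxx mul1r big1 ?addr0 // => l.
  by rewrite eq_sym => /negPf ->; rewrite mul0r.
under eq_bigr => l _ do rewrite -ha mulr_suml.
rewrite exchange_big /= big1 // => i' _.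
under eq_bigr => l _ do rewrite mulr_suml.
rewrite exchange_big /= big1 // => j' _.
under eq_bigr => l _ do rewrite -mulrA.
by rewrite -mulr_sumr (lie_step_le2_cR rat hc).2 mulr0.
Qed.

Lemma canonical_bracket_weights i j k : c i j k != 0 ->
  [/\ w k = 2%N, w i = 1%N & w j = 1%N].
Proof.
case: (hcan) => hc _ _ w12 [w2 _] cn0; split; first exact: w2 cn0.
- by case: (w12 i) => // /canonical_derived_central h; rewrite h eqxx in cn0.
- case: (w12 j) => // /canonical_derived_central h.
  by rewrite hc.1 h oppr0 eqxx in cn0.
Qed.

End CanonicalStructure.

Section Dilation.
Variables (R : realType) (n : nat) (w : 'I_n -> nat).

Local Notation G := 'rV[R]_n.
Local Notation D := (dil w).

Lemma dilE (l : R) (x : G) k : D l x 0 k = l ^+ w k * x 0 k.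
Proof. by rewrite mxE. Qed.

Lemma dilN (l : R) (x : G) : D l (- x) = - D l x.
Proof. by apply/rowP => k; rewrite !mxE mulrN. Qed.

Lemma dil0 (l : R) : D l 0 = 0 :> G.
Proof. by apply/rowP => k; rewrite !mxE mulr0. Qed.

Lemma dil1 (x : G) : D 1 x = x.
Proof. by apply/rowP => k; rewrite !mxE expr1n mul1r. Qed.

Lemma dilM (l m : R) (x : G) : D l (D m x) = D (l * m) x.
Proof. by apply/rowP => k; rewrite !mxE exprMn mulrA. Qed.

Lemma dilK (l : R) : l != 0 -> cancel (D l) (D l^-1).
Proof. by move=> l0 x; rewrite dilM mulVf // dil1. Qed.

Lemma dilVK (l : R) : l != 0 -> cancel (D l^-1) (D l).
Proof. by move=> l0 x; rewrite dilM mulfV // dil1. Qed.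

Lemma dil_inj (l : R) : l != 0 -> injective (D l).
Proof. by move/dilK/can_inj. Qed.

Variable c : 'I_n -> 'I_n -> 'I_n -> R.
Hypothesis hw : forall i j k, c i j k != 0 -> w k = (w i + w j)%N.

Lemma dil_lbr (l : R) (x y : G) : D l (lbr c x y) = lbr c (D l x) (D l y).
Proof.
apply/rowP => k; rewrite !mxE mulr_sumr; apply: eq_bigr => i _.
rewrite mulr_sumr; apply: eq_bigr => j _; rewrite !mxE.
have [->|/hw->] := eqVneq (c i j k) 0; first by rewrite !mulr0.
by rewrite exprD; ring.
Qed.

Lemma dil_gmul (l : R) (x y : G) : D l (gmul c x y) = gmul c (D l x) (D l y).
Proof. by rewrite /gmul -dil_lbr; apply/rowP => k; rewrite !mxE; ring. Qed.

End Dilation.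

Section GeneratedSubgroup.
Variables (T : Type) (mul : T -> T -> T) (inv : T -> T) (e : T) (S : set T).

Local Notation H := (gen_subgroup mul inv e S).

Lemma gen_subgroup_id : H e.
Proof. by move=> P _ Pe _ _. Qed.

Lemma gen_subgroup_mul x y : H x -> H y -> H (mul x y).
Proof. move=> Hx Hy P SP Pe PM PV; exact: PM _ _ (Hx P SP Pe PM PV) (Hy P SP Pe PM PV). Qed.

Lemma gen_subgroup_inv x : H x -> H (inv x).
Proof. move=> Hx P SP Pe PM PV; exact: PV _ (Hx P SP Pe PM PV). Qed.

Lemma gen_subgroup_min (K : set T) : is_subgroup mul inv e K -> S `<=` K -> H `<=` K.
Proof. by move=> [Ke KM KV] SK x; apply. Qed.

End GeneratedSubgroup.

Section Lattice.
Variables (R : realType) (n : nat) (c : 'I_n -> 'I_n -> 'I_n -> int).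
Hypothesis hc : lie_step_le2 c.

Local Notation G := 'rV[R]_n.
Local Notation mul := (gmul (cR c)).

Lemma Gam0 : Gam c (0 : G).
Proof. exact: gen_subgroup_id. Qed.

Lemma GamM (x y : G) : Gam c x -> Gam c y -> Gam c (mul x y).
Proof. exact: gen_subgroup_mul. Qed.

Lemma GamN (x : G) : Gam c x -> Gam c (- x).
Proof. exact: gen_subgroup_inv. Qed.

Lemma GamNM (x y : G) : Gam c x -> Gam c y -> Gam c (mul (- x) y).
Proof. by move=> Gx Gy; apply: GamM => //; apply: GamN. Qed.

Lemma GamMr (x y : G) : Gam c x -> Gam c (mul x y) -> Gam c y.
Proof. by move=> Gx Gxy; rewrite -(gmulKg (lie_step_le2_cR R hc) x y); apply: GamNM. Qed.

(* The structure constants are even, which cancels the 1/2 of the group law. *)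
Lemma Gam_int (x : G) : (forall i j k, (2 %| c i j k)%Z) ->
  Gam c x -> forall i, x 0 i \is a Num.int.
Proof.
move=> c2; suff : Gam c `<=` [set x : G | forall i, x 0 i \is a Num.int] by apply.
apply: gen_subgroup_min => [|_ [i _ <-] j]; last first.
  by rewrite mxE; case: (_ && _); rewrite ?rpred1 ?rpred0.
split=> [i | u v Hu Hv k | u Hu k]; rewrite !mxE ?rpred0 ?rpredN //.
rewrite !rpredD ?Hu ?Hv // mulr_sumr rpred_sum // => i _.
rewrite mulr_sumr rpred_sum // => j _; rewrite /cR -(divzK (c2 i j k)) intrM.
set q := (c i j k %/ 2)%Z; have -> : 2^-1 * (u 0 i * v 0 j * (q%:~R * 2%:~R)) =
  u 0 i * v 0 j * q%:~R :> R by field.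
by rewrite !rpredM ?Hu ?Hv ?intr_int.
Qed.

End Lattice.

Arguments Gam0 {R n c}.

Section HomogeneousNorm.
Variables (R : realType) (n : nat) (c : 'I_n -> 'I_n -> 'I_n -> int) (w : 'I_n -> nat).
Variable N : 'rV[R]_n -> R.
Hypotheses (hc : lie_step_le2 c) (hN : homog_norm c w N).

Local Notation G := 'rV[R]_n.
Local Notation mul := (gmul (cR c)).

Lemma hnorm_eq0 (x : G) : N x = 0 <-> x = 0.
Proof. by case: hN. Qed.

Lemma hnormN (x : G) : N (- x) = N x.
Proof. by case: hN => _ + _ _ _; apply. Qed.

Lemma hnorm_dil (l : R) (x : G) : 0 < l -> N (dil w l x) = l * N x.
Proof. by case: hN => _ _ + _ _; apply. Qed.

Lemma hnorm_gmul (x y : G) : N (mul x y) <= N x + N y.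
Proof. by case: hN. Qed.

Lemma hnorm_continuous : continuous N.
Proof. by case: hN. Qed.

Lemma hnorm0 : N 0 = 0.
Proof. exact/hnorm_eq0. Qed.

Lemma hnorm_ge0 (x : G) : 0 <= N x.
Proof.
have := hnorm_gmul x (- x); rewrite (gmulgN (lie_step_le2_cR R hc)) hnorm0 hnormN.
by rewrite -mulr2n -mulr_natr pmulr_lge0.
Qed.

Lemma hnorm_gmul3 (x y z : G) : N (mul x (mul y z)) <= N x + N y + N z.
Proof. by rewrite -addrA; apply: le_trans (hnorm_gmul _ _) _; rewrite lerD2l hnorm_gmul. Qed.

End HomogeneousNorm.

Lemma sphere_lbound (R : realType) n (N : 'rV[R]_n -> R) :
  continuous N -> (forall x, N x = 0 -> x = 0) ->
  exists2 e, 0 < e & forall s, `|s| = 1 -> e <= `|N s|.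
Proof.
move=> Nc N0; set K := [set s : 'rV[R]_n | `|s| = 1].
have Kc : compact K.
  apply: bounded_closed_compact.
    by exists 1; split => // M M1 x Kx; rewrite /= Kx ltW.
  rewrite (_ : K = Num.Def.normr @^-1` [set 1]) //.
  by apply: (continuous_closedP _).1; [exact: norm_continuous | exact: closed_eq].
have NKc : closed (N @` K).
  by apply: compact_closed; [exact: Rhausdorff | apply: continuous_compact => //; exact: continuous_subspaceT].
have NK0 : (~` (N @` K)) 0.
  move=> [s Ks /N0 s0]; move: Ks; rewrite /K /= s0 normr0.
  by move/eqP; rewrite eq_sym oner_eq0.
have /nbhs_ballP [e /= e0 he] := closed_openC NKc 0 NK0.
exists e => // s Ks; rewrite leNgt; apply/negP => hlt.
by apply: (he (N s)); [rewrite /ball /= sub0r normrN | exists s].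
Qed.

Lemma coord_le_normr (R : realType) n (x : 'rV[R]_n) i : `|x 0 i| <= `|x|.
Proof.
rewrite /Num.Def.normr /= mx_normrE.
exact: (le_bigmax _ (fun ij : 'I_1 * 'I_n => `|x ij.1 ij.2|) (ord0, i)).
Qed.

Section WeightsOneTwo.
Variables (R : realType) (n : nat) (w : 'I_n -> nat).
Hypothesis w12 : forall i, w i = 1%N \/ w i = 2%N.

Local Notation G := 'rV[R]_n.

(* The dilation factor is the largest of the |x_i| ^ (1 / w i). *)
Lemma dil_normalize (x : G) : x != 0 -> exists2 t, 0 < t & `|dil w t^-1 x| = 1.
Proof.
move=> xn0; have [i0 _] : exists i : 'I_n, true.
  by case: n x xn0 => [|m] x; [rewrite thinmx0 eqxx | exists ord0].
pose rt j := if w j == 1%N then `|x 0 j| else Num.sqrt `|x 0 j|.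
have [i1 _ maxi1] := @arg_maxP _ _ _ i0 xpredT rt isT; set t := rt i1 in maxi1.
have xt j : `|x 0 j| <= t ^+ w j.
  have := maxi1 j isT; rewrite /rt; case: (w12 j) => -> /=; first by rewrite expr1.
  move=> le_sqrt; rewrite -(sqr_sqrtr (normr_ge0 (x 0 j))) !expr2.
  by rewrite ler_pM ?sqrtr_ge0 ?le_sqrt.
have xt1 : `|x 0 i1| = t ^+ w i1.
  by rewrite /t /rt; case: (w12 i1) => -> /=; rewrite ?expr1 ?sqr_sqrtr.
have t_gt0 : 0 < t.
  have t_ge0 : 0 <= t by rewrite /t /rt; case: ifP; rewrite ?sqrtr_ge0.
  rewrite lt_def t_ge0 andbT; apply: contra xn0 => /eqP t0.
  apply/eqP/rowP => j; rewrite mxE; apply/normr0_eq0/le_anti.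
  by rewrite normr_ge0 andbT (le_trans (xt j)) // t0 expr0n; case: (w12 j) => ->.
exists t => //; have tw_gt0 j : 0 < t ^+ w j by rewrite exprn_gt0.
have sE j : `|dil w t^-1 x 0 j| = `|x 0 j| / t ^+ w j.
  by rewrite mxE normrM exprVn normrV ?unitfE ?gt_eqF // gtr0_norm // mulrC.
apply/le_anti/andP; split; last first.
  by have := coord_le_normr (dil w t^-1 x) i1; rewrite sE xt1 divff ?gt_eqF.
rewrite /Num.Def.normr /= mx_normrE; apply: bigmax_le => // -[a j] _ /=.
by rewrite (ord1 a) sE ler_pdivrMr // mul1r.
Qed.

End WeightsOneTwo.

Lemma hnorm_coord_bound (R : realType) n (c : 'I_n -> 'I_n -> 'I_n -> int)
    (w : 'I_n -> nat) (N : 'rV[R]_n -> R) :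
  lie_step_le2 c -> homog_norm c w N -> (forall i, w i = 1%N \/ w i = 2%N) ->
  forall r, exists K, forall x, N x < r -> forall i, `|x 0 i| <= K.
Proof.
move=> hc hN w12 r.
have [e e_gt0 le_e] := sphere_lbound (hnorm_continuous hN) (fun x => (hnorm_eq0 hN x).1).
exists (r / e + (r / e) ^+ 2) => x Nx i.
have r_gt0 : 0 < r by apply: le_lt_trans (hnorm_ge0 hc hN x) Nx.
have re_ge0 : 0 <= r / e by rewrite divr_ge0 // ltW.
have [->|/(dil_normalize w12) [t t_gt0 s1]] := eqVneq x 0.
  by rewrite mxE normr0 addr_ge0 ?sqr_ge0.
set s := dil w t^-1 x in s1.
have xE : x = dil w t s by rewrite /s dilVK ?gt_eqF.
have le_t : t <= r / e.
  rewrite ler_pdivlMr // ltW // (le_lt_trans _ Nx) // xE (hnorm_dil hN) // ler_pM2l //.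
  by rewrite -[N s]ger0_norm ?le_e ?(hnorm_ge0 hc hN).
have le_s : `|s 0 i| <= 1 by rewrite -s1 coord_le_normr.
rewrite xE dilE normrM gtr0_norm ?exprn_gt0 //; apply: le_trans (ler_piMr _ le_s) _.
  by rewrite exprn_ge0 // ltW.
case: (w12 i) => ->; rewrite ?expr1.
  by rewrite ler_wpDr ?sqr_ge0.
by rewrite ler_wpDl // lerXn2r ?nnegrE // ltW.
Qed.

Lemma finite_int_box (R : realType) n (K : R) :
  finite_set [set x : 'rV[R]_n | (forall i, x 0 i \is a Num.int) /\
                                 forall i, `|x 0 i| <= K].
Proof.
set B := Num.Def.archi_bound `|K|.
have KB : `|K| < B%:R by exact: archi_boundP.
pose f (phi : {ffun 'I_n -> 'I_(B + B).+1}) : 'rV[R]_n := \row_i ((phi i)%:R - B%:R).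
apply: (@sub_finite_set _ _ (range f)); last exact: finite_image.
move=> x [xint xK].
have zE i : x 0 i = (Num.floor (x 0 i))%:~R by rewrite floorK ?xint.
have zB i : `|Num.floor (x 0 i)| < B%:Z.
  rewrite -(ltr_int R) intr_norm -zE; apply: le_lt_trans (xK i) _.
  exact: le_lt_trans (ler_norm K) KB.
have zB' i : (0 <= Num.floor (x 0 i) + B%:Z)%R /\ (absz (Num.floor (x 0 i) + B%:Z)%R < (B + B).+1)%N.
  move: (zB i); rewrite ltr_norml => /andP[h1 h2].
  have z_ge0 : (0 <= Num.floor (x 0 i) + B%:Z)%R by rewrite -lerBlDr sub0r ltW.
  split=> //; rewrite -ltz_nat gez0_abs //.
  by rewrite -addnS PoszD ltr_leD // ltW // ltz_nat ltnS.
exists [ffun i => inord (absz (Num.floor (x 0 i) + B%:Z)%R)] => //.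
apply/rowP => i; rewrite !mxE ffunE inordK; last by case: (zB' i).
by rewrite natr_absz ger0_norm ?intrD ?addrK -?zE //; case: (zB' i).
Qed.

Lemma finite_Gam_hball (R : realType) n (c : 'I_n -> 'I_n -> 'I_n -> int)
    (w : 'I_n -> nat) (N : 'rV[R]_n -> R) :
  lie_step_le2 c -> (forall i j k, (2 %| c i j k)%Z) -> homog_norm c w N ->
  (forall i, w i = 1%N \/ w i = 2%N) ->
  forall r, finite_set [set x : 'rV[R]_n | Gam c x /\ N x < r].
Proof.
move=> hc c2 hN w12 r; have [K hK] := hnorm_coord_bound hc hN w12 r.
apply: (sub_finite_set _ (finite_int_box n K)) => x [Gx Nx].
by split; [exact: Gam_int | exact: hK].
Qed.

Lemma natr_le_expr (R : realFieldType) (l : R) m : 2 <= l -> m%:R <= l ^+ m.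
Proof.
move=> l_ge2; apply: (le_trans (y := 2 ^+ m)).
  by rewrite -natrX ler_nat ltnW // ltn_expl.
by apply: lerXn2r; rewrite // nnegrE; lra.
Qed.

Lemma lt_expr_archi_bound (R : realType) (l x : R) :
  2 <= l -> 0 <= x -> x < l ^+ Num.Def.archi_bound x.
Proof. by move=> l_ge2 /archi_boundP; move/lt_le_trans; apply; exact: natr_le_expr. Qed.

Section BracketWeights.
Variables (R : realType) (n : nat) (c : 'I_n -> 'I_n -> 'I_n -> int) (w : 'I_n -> nat).
Hypothesis hw : forall i j k, c i j k != 0 -> [/\ w k = 2%N, w i = 1%N & w j = 1%N].

Local Notation G := 'rV[R]_n.
Local Notation br := (lbr (cR c)).

Lemma lbr_weight1 (h v : G) k : w k = 1%N -> br h v 0 k = 0.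
Proof.
move=> wk; rewrite lbrE big1 // => i _; rewrite big1 // => j _.
have [c0|/hw[]] := eqVneq (c i j k) 0; first by rewrite /cR c0 mulr0.
by rewrite wk.
Qed.

Lemma lbr_weight2l (h v : G) : (forall k, w k = 1%N -> h 0 k = 0) -> br h v = 0.
Proof.
move=> h0; apply/rowP => k; rewrite lbrE mxE big1 // => i _; rewrite big1 // => j _.
have [c0|/hw[_ wi _]] := eqVneq (c i j k) 0; first by rewrite /cR c0 mulr0.
by rewrite h0 // !mul0r.
Qed.

Lemma dil_gmul_weights (l : R) (x y : G) :
  dil w l (gmul (cR c) x y) = gmul (cR c) (dil w l x) (dil w l y).
Proof.
apply: dil_gmul => i j k; rewrite intr_eq0 => /hw[-> -> ->] //.
Qed.

End BracketWeights.

Section Substitution.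
Variables (R : realType) (n : nat) (c : 'I_n -> 'I_n -> 'I_n -> int) (w : 'I_n -> nat).
Variables (N : 'rV[R]_n -> R) (V : set 'rV[R]_n) (A : finType) (l0 rm rp : R).
Variable S0 : A -> 'rV[R]_n -> option A.
Hypotheses (hc : lie_step_le2 c) (c2 : forall i j k, (2 %| c i j k)%Z).
Hypothesis hw : forall i j k, c i j k != 0 -> [/\ w k = 2%N, w i = 1%N & w j = 1%N].
Hypothesis hN : homog_norm c w N.
Hypothesis Vtile : forall g, exists! gam, Gam c gam /\ V (gmul (cR c) (ginv gam) g).
Hypotheses (rm_gt0 : 0 < rm) (rm_lt_rp : rm < rp) (l0_big : 1 + rp / rm < l0).
Hypotheses (Vin : hball c N rm `<=` V) (Vout : V `<=` hball c N rp).
Hypothesis dil_Gam : forall g, Gam c g -> Gam c (dil w l0 g).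
Hypothesis S0_supp : forall a y, S0 a y <> None <-> (Gam c y /\ DV w l0 V y).

Local Notation G := 'rV[R]_n.
Local Notation mul := (gmul (cR c)).
Local Notation D := (dil w l0).
Local Notation DVs := (DV w l0 V).
Local Notation S := (subst c w V l0 S0).

Let hcR : lie_step_le2 (cR c : _ -> _ -> _ -> R) := lie_step_le2_cR R hc.

Lemma l0_gt2 : 2 < l0.
Proof.
have : 1 < rp / rm by rewrite ltr_pdivlMr // mul1r.
by have := l0_big; move: (rp / rm) => t; lra.
Qed.

Lemma l0_gt0 : 0 < l0.
Proof. by apply: lt_trans l0_gt2. Qed.

Lemma rp_gt0 : 0 < rp.
Proof. exact: lt_trans rm_lt_rp. Qed.

Lemma hballE r (x : G) : hball c N r x <-> N x < r.
Proof. by rewrite /hball /hdist /= /ginv oppr0 gmul0g. Qed.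

Lemma DV0 : DVs 0.
Proof. by exists 0; [apply: Vin; rewrite hballE (hnorm0 hN) | rewrite dil0]. Qed.

Lemma DV_hnorm (y : G) : DVs y -> N y < l0 * rp.
Proof.
case=> v /Vout; rewrite hballE => Nv <-.
by rewrite (hnorm_dil hN) ?ltr_pM2l ?l0_gt0.
Qed.

Lemma Gam_hnorm_small (h : G) : Gam c h -> N h < rm -> h = 0.
Proof.
move=> Gh Nh; have [g0 [_ uniq_g0]] := Vtile h.
have -> : h = g0.
  apply/esym/uniq_g0; split; rewrite // /ginv gmulNg //.
  by apply: Vin; rewrite hballE (hnorm0 hN).
apply/uniq_g0; split; first exact: Gam0.
by rewrite /ginv oppr0 gmul0g; apply: Vin; rewrite hballE.
Qed.

Lemma dil_tile_uniq (e1 e2 y1 y2 : G) : Gam c e1 -> Gam c e2 -> DVs y1 -> DVs y2 ->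
  mul (D e1) y1 = mul (D e2) y2 -> e1 = e2.
Proof.
move=> Ge1 Ge2 [v1 Vv1 <-] [v2 Vv2 <-].
rewrite -!dil_gmul_weights // => /(dil_inj (lt0r_neq0 l0_gt0)) e1v1.
have [g0 [_ uniq_g0]] := Vtile (mul e1 v1).
rewrite -(uniq_g0 e1 (conj Ge1 _)) ?(uniq_g0 e2 (conj Ge2 _)) /ginv ?gmulKg //.
by rewrite e1v1 gmulKg.
Qed.

Lemma dil_tile_ex (g : G) : exists e, Gam c e /\ DVs (mul (- D e) g).
Proof.
have [e [[Ge Ve] _]] := Vtile (dil w l0^-1 g).
exists e; split=> //; exists (mul (ginv e) (dil w l0^-1 g)) => //.
by rewrite dil_gmul_weights // dilN dilVK // gt_eqF ?l0_gt0.
Qed.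

Definition Gam_supported (P : G -> option A) := forall x, P x <> None -> Gam c x.

Lemma S0_None a (y : G) : ~ (Gam c y /\ DVs y) -> S0 a y = None.
Proof. by move=> Dy; case E: (S0 a y) => //; case: Dy; apply/(S0_supp a); rewrite E. Qed.

Lemma subst_dil_gmul (P : G -> option A) e b (y : G) :
  Gam_supported P -> P e = Some b -> DVs y -> S P (mul (D e) y) = S0 b y.
Proof.
move=> GP Pe Dy; have Ge : Gam c e by apply: GP; rewrite Pe.
rewrite /subst; case: pselect => [H|H].
- case: (cid H) => eta [Peta [Gx Dx]] /=.
  have Geta : Gam c eta by exact: GP.
  have [Gy|nGy] := pselect (Gam c y).
  + have -> : eta = e by apply: (dil_tile_uniq Geta Ge Dx Dy); rewrite /ginv gmulNKg.
    by rewrite Pe /ginv gmulKg.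
  + case: nGy; apply: (GamMr hc (dil_Gam Ge)).
    by apply: (GamMr hc (GamN (dil_Gam Geta))); exact: Gx.
- apply/esym/S0_None => -[Gy _]; apply: H; exists e; split; first by rewrite Pe.
  by rewrite /ginv gmulKg.
Qed.

Lemma subst_neq_None (P : G -> option A) (x : G) : S P x <> None ->
  exists e b y, [/\ P e = Some b, Gam c y, DVs y & x = mul (D e) y].
Proof.
rewrite /subst; case: pselect => // H; case: (cid H) => eta [_ [Gx Dx]] /=.
case Peta: (P eta) => [b|] // _.
by exists eta, b, (mul (ginv (D eta)) x); rewrite /ginv gmulNKg.
Qed.

Lemma Gam_supported_subst (P : G -> option A) : Gam_supported P -> Gam_supported (S P).
Proof.
move=> GP x /subst_neq_None [e [b [y [Pe Gy _ ->]]]].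
by apply: GamM => //; apply: dil_Gam; apply: GP; rewrite Pe.
Qed.

Lemma Gam_supported_Pa a : Gam_supported (Pa a).
Proof. by move=> x; rewrite /Pa; case: eqP => // -> _; exact: Gam0. Qed.

Lemma Gam_supported_iter k a : Gam_supported (iter k S (Pa a)).
Proof.
by elim: k => [|k IHk] /=; [exact: Gam_supported_Pa | exact: Gam_supported_subst].
Qed.

Lemma subst_dil_neq_None (P : G -> option A) (z : G) :
  Gam_supported P -> Gam c z -> S P (D z) <> None -> P z <> None.
Proof.
move=> GP Gz /subst_neq_None [e [b [y [Pe Gy Dy Dz]]]].
have Ge : Gam c e by apply: GP; rewrite Pe.
suff <- : e = z by rewrite Pe.
by apply: (dil_tile_uniq Ge Gz Dy DV0); rewrite -Dz gmulg0.
Qed.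

Lemma subst_Pa a : S (Pa a) = S0 a.
Proof.
apply: funext => x; have [Dx|nDx] := pselect (DVs x).
  have Pa0 : Pa a (0 : G) = Some a by rewrite /Pa eqxx.
  by rewrite -(subst_dil_gmul (@Gam_supported_Pa a) Pa0 Dx) dil0 gmul0g.
rewrite S0_None; last by case.
case Sx: (S (Pa a) x) => [v|] //; have : S (Pa a) x <> None by rewrite Sx.
move=> /subst_neq_None [e [b [y [Pe _ Dy xE]]]]; case: nDx.
by move: Pe; rewrite /Pa; case: eqP => // e0 _; rewrite xE e0 dil0 gmul0g.
Qed.

Hypothesis hnp : non_periodic c w V l0 S0.

Definition local_period (Q : G -> option A) (u d : G) (r : R) :=
  forall z, Gam c z -> N (mul (- u) z) < r -> Q z <> None /\ Q (mul d z) = Q z.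

Lemma subst_shift_eq0 (P : G -> option A) e1 e2 b1 b2 (g : G) :
  Gam_supported P -> P e1 = Some b1 -> P e2 = Some b2 -> Gam c g -> DVs g ->
  (forall x, Gam c x -> DVs (mul g x) -> DVs x ->
     S P (mul (D e2) (mul g x)) = S P (mul (D e1) x)) -> g = 0.
Proof.
move=> GP Pe1 Pe2 Gg Dg shift; apply: contrapT => gn0.
apply: (hnp.2 g Gg Dg gn0 b2 b1); rewrite !subst_Pa; apply: funext => x.
rewrite /prestr /ptrans; case: asboolP => // -[Dgx Dx]; rewrite /ginv opprK.
have [Gx|nGx] := pselect (Gam c x).
  by rewrite -(subst_dil_gmul GP Pe2 Dgx) -(subst_dil_gmul GP Pe1 Dx) shift.
by rewrite !S0_None // => -[]; last move/(GamMr hc Gg).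
Qed.

Lemma local_period_subst_dil (P : G -> option A) (u d : G) (r : R) :
  Gam_supported P -> Gam c u -> Gam c d -> 3 * (l0 * rp) <= r ->
  local_period (S P) u d r -> exists2 d', Gam c d' & d = D d'.
Proof.
move=> GP Gu Gd le_r per; have lrp_gt0 : 0 < l0 * rp by rewrite mulr_gt0 ?l0_gt0 ?rp_gt0.
have [Su Sdu] : S P u <> None /\ S P (mul d u) = S P u.
  by apply: per; rewrite // gmulNg // (hnorm0 hN); lra.
have /subst_neq_None : S P (mul d u) <> None by rewrite Sdu.
move=>  [e1 [b1 [y1 [Pe1 Gy1 Dy1 duE]]]].
have Ge1 : Gam c e1 by apply: GP; rewrite Pe1.
have [e2 [Ge2 Dg]] := dil_tile_ex (mul (- d) (D e1)).
set g := mul (- D e2) _ in Dg.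
have De1E : D e1 = mul d (mul u (- y1)) by rewrite -gmulA // duE gmulgK.
have De2gE : mul (D e2) g = mul u (- y1) by rewrite gmulNKg // De1E gmulKg.
have Gg : Gam c g by apply: GamNM; [exact: dil_Gam | apply: GamNM => //; exact: dil_Gam].
have Nu (y : G) : N y < l0 * rp -> N (mul (- u) (mul u (mul (- y1) y))) < 2 * (l0 * rp).
  move=> Ny; rewrite gmulKg //; apply: le_lt_trans (hnorm_gmul hN _ _) _.
  by rewrite (hnormN hN); have := DV_hnorm Dy1; lra.
have NDe2 : N (mul (- u) (D e2)) < r.
  have -> : D e2 = mul u (mul (- y1) (- g)) by rewrite -gmulA // -De2gE gmulgK.
  by have := Nu (- g); rewrite (hnormN hN) => /(_ (DV_hnorm Dg)); lra.
have Pe2 : P e2 <> None.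
  by apply: (subst_dil_neq_None GP Ge2); case: (per _ (dil_Gam Ge2) NDe2).
case Pe2' : (P e2) Pe2 => [b2|] // _.
have g0 : g = 0.
  apply: (subst_shift_eq0 GP Pe1 Pe2' Gg Dg) => x Gx Dgx Dx.
  have Gz : Gam c (mul (mul u (- y1)) x) by apply: GamM => //; apply: GamM => //; exact: GamN.
  rewrite -gmulA // De2gE De1E [in RHS]gmulA //; apply/esym; apply: (per _ Gz _).2.
  by rewrite gmulA //; have := Nu _ (DV_hnorm Dx); lra.
exists (mul e1 (- e2)); first by apply: GamM => //; apply: GamN.
have De2E : D e2 = mul (- d) (D e1) by rewrite -[LHS](gmulg0 (cR c)) -g0 /g gmulNKg.
by rewrite dil_gmul_weights // dilN De2E opp_gmul // opprK gmulNKg.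
Qed.

Lemma local_period_desubst (P : G -> option A) (u u' d' : G) (r : R) :
  Gam_supported P -> Gam c u' -> Gam c d' -> DVs (mul (- D u') u) ->
  local_period (S P) u (D d') r -> local_period P u' d' (r / l0 - 2 * rp).
Proof.
move=> GP Gu' Gd' Du per z Gz Nz.
have NDzy (y : G) : DVs y -> N (mul (- u) (mul (D z) y)) < r.
  move=> Dy; have -> : mul (- u) (mul (D z) y) =
      mul (mul (- u) (D u')) (mul (D (mul (- u') z)) y).
    by rewrite dil_gmul_weights // dilN gmulA // -(gmulA hcR (D u')) gmulNKg.
  apply: le_lt_trans (hnorm_gmul3 hN _ _ _) _.
  rewrite -(hnormN hN) opp_gmul // opprK (hnorm_dil hN) ?l0_gt0 //.
  have := DV_hnorm Du; have := DV_hnorm Dy.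
  have : l0 * N (mul (- u') z) < r - 2 * (l0 * rp).
    rewrite (_ : r - _ = l0 * (r / l0 - 2 * rp)) ?ltr_pM2l ?l0_gt0 //.
    by field; rewrite lt0r_neq0 ?l0_gt0.
  lra.
have per_Dzy (y : G) : Gam c y -> DVs y ->
    S P (mul (D z) y) <> None /\ S P (mul (D (mul d' z)) y) = S P (mul (D z) y).
  move=> Gy Dy; rewrite dil_gmul_weights // gmulA //.
  by apply: per (NDzy y Dy); apply: GamM => //; exact: dil_Gam.
have [SDz _] := per_Dzy 0 Gam0 DV0; rewrite !gmulg0 in SDz.
have Gd'z : Gam c (mul d' z) by exact: GamM.
have SDd'z : S P (D (mul d' z)) <> None.
  by have [_] := per_Dzy 0 Gam0 DV0; rewrite !gmulg0 => ->.
case Pz: (P z) (subst_dil_neq_None GP Gz SDz) => [a1|] // _.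
case Pd'z: (P (mul d' z)) (subst_dil_neq_None GP Gd'z SDd'z) => [a2|] // _.
split=> //; congr Some; apply: hnp.1; apply: funext => y.
have [[Gy Dy]|nGDy] := pselect (Gam c y /\ DVs y); last by rewrite !S0_None.
by rewrite -(subst_dil_gmul GP Pz Dy) -(subst_dil_gmul GP Pd'z Dy) (per_Dzy y Gy Dy).2.
Qed.

Lemma local_period_descent (P : G -> option A) (u d : G) (r : R) :
  Gam_supported P -> Gam c u -> Gam c d -> 3 * (l0 * rp) <= r ->
  local_period (S P) u d r ->
  exists u' d', [/\ Gam c u', Gam c d', D d' = d, DVs (mul (- D u') u) &
                    local_period P u' d' (r / l0 - 2 * rp)].
Proof.
move=> GP Gu Gd le_r per.
have [d' Gd' dE] := local_period_subst_dil GP Gu Gd le_r per.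
have [u' [Gu' Du]] := dil_tile_ex u.
by exists u', d'; split=> //; apply: (local_period_desubst GP Gu' Gd' Du); rewrite -dE.
Qed.

(* The conjugate [h] of the period [gam] after [i] descent steps; the last
   field is the decay of its norm once the weight-one part has vanished. *)
Definition descent_inv (gam h : G) (i J1 : nat) (B : R) :=
  [/\ Gam c h, h <> 0, (forall k, w k = 1%N -> h 0 k * l0 ^+ i = gam 0 k), N h <= B &
      ((J1 <= i)%N -> N h * l0 ^+ (i - J1) <= B)].

(* A nonzero integer coordinate has norm >= 1, so |gam_k| would be >= l0 ^+ i. *)
Lemma weight1_coord_eq0 (gam h : G) i J1 : Gam c h ->
  (forall k, `|gam 0 k| < l0 ^+ J1) -> (J1 <= i)%N ->
  (forall k, w k = 1%N -> h 0 k * l0 ^+ i = gam 0 k) ->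
  forall k, w k = 1%N -> h 0 k = 0.
Proof.
move=> Gh gam_lt le_J1i hgam k wk; apply/eqP; apply: contraT => hk0.
have l0_gt1 : 1 < l0 by have := l0_gt2; lra.
have := gam_lt k; rewrite -(hgam k wk) normrM [`|l0 ^+ i|]ger0_norm ?exprn_ge0 ?ltW ?l0_gt0 //.
apply: contraLR => _; rewrite -leNgt; apply: (le_trans (y := l0 ^+ i)).
  by rewrite ler_eXn2l.
apply: ler_peMl; first by rewrite exprn_ge0 // ltW ?l0_gt0.
exact: norm_intr_ge1 (Gam_int c2 Gh k) hk0.
Qed.

Lemma descent_inv_step (gam h h' v : G) i J1 B :
  (forall k, `|gam 0 k| < l0 ^+ J1) -> 2 * (l0 * rp) <= (l0 - 1) * B ->
  descent_inv gam h i J1 B -> Gam c h' -> DVs (- v) -> D h' = mul (- v) (mul h v) ->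
  descent_inv gam h' i.+1 J1 B.
Proof.
move=> gam_lt le_B [Gh hn0 hgam NhB hJ1] Gh' Dv Dh'.
have Nv : N v < l0 * rp by rewrite -(hnormN hN); exact: DV_hnorm.
have l0_gt0 := l0_gt0; have Dh'E := Dh'; rewrite gconjE // in Dh'E.
have Nh'E : l0 * N h' = N (mul (- v) (mul h v)) by rewrite -Dh' (hnorm_dil hN).
have h'1 k : w k = 1%N -> l0 * h' 0 k = h 0 k.
  move=> wk; have := congr1 (fun x : G => x 0 k) Dh'E.
  by rewrite dilE wk expr1 mxE (lbr_weight1 hw) // addr0.
split=> //.
- move=> h'0; apply: hn0; apply: (gmulIg hcR (x := v)); apply: (gmulI hcR (x := - v)).
  by rewrite -Dh' h'0 dil0 gmul0g gmulNg.
- by move=> k wk; rewrite exprS mulrA (mulrC _ l0) h'1 //; exact: hgam.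
- rewrite -(ler_pM2l l0_gt0) Nh'E; apply: le_trans (hnorm_gmul3 hN _ _ _) _.
  by rewrite (hnormN hN); lra.
move=> le_J1i; have [->|] := eqVneq J1 i.+1.
  rewrite subnn expr0 mulr1 -(ler_pM2l l0_gt0) Nh'E.
  by apply: le_trans (hnorm_gmul3 hN _ _ _) _; rewrite (hnormN hN); lra.
move=> J1_neq; have le_J1i' : (J1 <= i)%N by rewrite -ltnS ltn_neqAle J1_neq.
have h_central := weight1_coord_eq0 Gh gam_lt le_J1i' hgam.
rewrite (lbr_weight2l hw) // addr0 in Dh'E.
rewrite subSn // exprS mulrA (mulrC (N h')) -(hnorm_dil hN) // Dh'E; exact: hJ1.
Qed.

(* Radii for which [local_period_descent] can be iterated [m] times. *)
Fixpoint descent_radius (m : nat) : R :=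
  if m is m'.+1 then l0 * (descent_radius m' + 2 * rp) else 3 * (l0 * rp).

Lemma descent_radius_ge m : 3 * (l0 * rp) <= descent_radius m.
Proof.
have lrp_gt0 : 0 < l0 * rp by rewrite mulr_gt0 ?l0_gt0 ?rp_gt0.
have l0_ge1 : 1 <= l0 by have := l0_gt2; lra.
elim: m => [|m IHm] //=; rewrite mulrDr.
have : descent_radius m <= l0 * descent_radius m by rewrite ler_peMl //; lra.
have := rp_gt0; nra.
Qed.

Lemma descent_radiusS m : descent_radius m.+1 / l0 - 2 * rp = descent_radius m.
Proof. by rewrite /= mulrC mulKf ?addrK // lt0r_neq0 ?l0_gt0. Qed.

Lemma descent_iter (gam : G) a J1 T B m (u0 d0 : G) :
  (forall k, `|gam 0 k| < l0 ^+ J1) -> 2 * (l0 * rp) <= (l0 - 1) * B ->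
  Gam c u0 -> Gam c d0 -> local_period (iter m S (Pa a)) u0 d0 (descent_radius T) ->
  descent_inv gam (mul (- u0) (mul d0 u0)) 0 J1 B ->
  forall i j, (j + i = m)%N -> (i <= T)%N ->
  exists u d, [/\ Gam c u, Gam c d,
    local_period (iter j S (Pa a)) u d (descent_radius (T - i)) &
    descent_inv gam (mul (- u) (mul d u)) i J1 B].
Proof.
move=> gam_lt le_B Gu0 Gd0 per0 inv0; elim=> [|i IHi] j jiE le_iT.
  by move: jiE; rewrite addn0 => ->; exists u0, d0; rewrite subn0.
have [u [d [Gu Gd per inv]]] := IHi j.+1 (etrans (addSnnS j i) jiE) (ltnW le_iT).
rewrite -(subnSK le_iT) in per.
have [u' [d' [Gu' Gd' dE Du per']]] :=
  local_period_descent (@Gam_supported_iter j a) Gu Gd (descent_radius_ge _) per.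
exists u', d'; split=> //; first by rewrite -descent_radiusS.
apply: (descent_inv_step (v := mul (- u) (D u')) gam_lt le_B inv).
- by apply: GamNM => //; apply: GamM.
- by rewrite opp_gmul // opprK.
- by rewrite !dil_gmul_weights // dilN dE opp_gmul // opprK !gmulA // !gmulNKg.
Qed.

Lemma local_period_Pa a (u d : G) r : 0 < r -> Gam c u ->
  local_period (Pa a) u d r -> mul (- u) (mul d u) = 0.
Proof.
move=> r_gt0 Gu /(_ u Gu); rewrite gmulNg // (hnorm0 hN) => /(_ r_gt0).
rewrite /Pa; have [->|_ []//] := eqVneq u 0; rewrite !gmulg0.
by have [-> _|_ []] := eqVneq d 0; rewrite ?oppr0 ?gmulg0.
Qed.

Lemma descent_parameters (gam : G) : exists J1 J2 B,
  [/\ forall k, `|gam 0 k| < l0 ^+ J1, 2 * (l0 * rp) <= (l0 - 1) * B,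
      N gam <= B & B < rm * l0 ^+ J2].
Proof.
have l0_ge2 : 2 <= l0 by rewrite ltW ?l0_gt2.
have lrp_gt0 : 0 < l0 * rp by rewrite mulr_gt0 ?l0_gt0 ?rp_gt0.
have Ngam_ge0 := hnorm_ge0 hc hN gam.
set B := N gam + 2 * (l0 * rp).
exists (\big[maxn/0%N]_(k < n) Num.Def.archi_bound `|gam 0 k|), (Num.Def.archi_bound (B / rm)), B.
split.
- move=> k; apply: lt_le_trans (lt_expr_archi_bound l0_ge2 (normr_ge0 _)) _.
  rewrite ler_eXn2l ?(lt_le_trans _ l0_ge2) ?ltr1n //.
  exact: (@leq_bigmax _ (fun k => Num.Def.archi_bound `|gam 0 k|)).
- have : 0 <= (l0 - 2) * B by apply: mulr_ge0; rewrite ?subr_ge0 // /B; lra.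
  have -> : (l0 - 1) * B = B + (l0 - 2) * B by ring.
  by rewrite /B; lra.
- by rewrite /B; lra.
- rewrite mulrC -ltr_pdivrMr //; apply: lt_expr_archi_bound => //.
  by rewrite divr_ge0 ?ltW // /B; lra.
Qed.

Hypothesis w12 : forall i, w i = 1%N \/ w i = 2%N.

Lemma Omega_local_period (om : G -> option A) (gam : G) (r : R) :
  Omega c w V l0 S0 om -> Gam c gam -> ptrans c gam om = om ->
  exists m a tau, Gam c tau /\
    local_period (iter m S (Pa a)) (- tau) (mul (- tau) (mul gam tau)) r.
Proof.
move=> [om_supp om_fin] Ggam om_per.
have [m [a [tau [M [Gtau omE]]]]] := om_fin _ (finite_Gam_hball hc c2 hN w12 (r + N gam)).
set Q := iter m S (Pa a) in omE *.
have QE x : Gam c x -> N x < r + N gam -> Q (mul (- tau) x) = om x.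
  move=> Gx Nx; have := congr1 (fun f => f x) omE.
  rewrite /prestr /ptrans /ginv; case: asboolP => [_|[]] //.
  case: asboolP => // _ omx; case: (om_supp x) => _ /(_ Gx); by rewrite omx.
have om_gam x : om (mul gam x) = om x.
  by have := congr1 (fun f => f (mul gam x)) om_per; rewrite /ptrans /ginv gmulKg.
exists m, a, tau; rewrite -/Q; split=> // z Gz; rewrite opprK => Nz.
have Gtz : Gam c (mul tau z) by exact: GamM.
have Qz : Q z = om (mul tau z).
  by rewrite -QE ?gmulKg //; have := hnorm_ge0 hc hN gam; lra.
rewrite Qz; split; first exact/om_supp.
rewrite !gmulA // QE; last by have := hnorm_gmul hN gam (mul tau z); lra.
- by rewrite om_gam.
- exact: GamM.
Qed.

Lemma Omega_aperiodic (om : G -> option A) (gam : G) :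
  Omega c w V l0 S0 om -> Gam c gam -> ptrans c gam om = om -> gam = 0.
Proof.
move=> om_Om Ggam om_per; apply: contrapT => gam_neq0.
have [J1 [J2 [B [gam_lt le_B NgamB B_lt]]]] := descent_parameters gam.
set T := (J1 + J2)%N.
have [m [a [tau [Gtau per]]]] := Omega_local_period (descent_radius T) om_Om Ggam om_per.
set d0 := mul (- tau) (mul gam tau) in per.
have Gd0 : Gam c d0 by apply: GamNM => //; exact: GamM.
have inv0 : descent_inv gam (mul (- - tau) (mul d0 (- tau))) 0 J1 B.
  rewrite /d0 opprK !gmulA // gmulNKg // gmulgN // gmulg0.
  by split=> // [k _|]; rewrite ?expr0 ?mulr1 // subn0 expr0 mulr1.
have iter_descent := descent_iter gam_lt le_B (GamN Gtau) Gd0 per inv0.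
have [le_mT|lt_Tm] := leqP m T.
  have [u [d [Gu _ per_u [_ hn0 _ _ _]]]] := iter_descent m 0%N (add0n _) le_mT.
  apply: hn0; apply: (local_period_Pa _ Gu per_u).
  by apply: lt_le_trans (descent_radius_ge _); rewrite !mulr_gt0 ?l0_gt0 ?rp_gt0.
have [u [d [_ _ _ [Gh hn0 _ _ hJ]]]] := iter_descent T (m - T)%N (subnK (ltnW lt_Tm)) (leqnn T).
apply: hn0; apply: Gam_hnorm_small => //.
have := hJ (leq_addr _ _); rewrite /T addKn => /le_lt_trans /(_ B_lt).
by rewrite ltr_pM2r ?exprn_gt0 ?l0_gt0.
Qed.

End Substitution.

Unset Implicit Arguments.

Theorem theorem1p4 (R : realType) (n : nat)
  (c : 'I_n -> 'I_n -> 'I_n -> int) (w : 'I_n -> nat)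
  (N : 'rV[R]_n -> R) (V : set 'rV[R]_n)
  (A : finType) (l0 : R) (S0 : A -> 'rV[R]_n -> option A) :
  canonical_2step_adapted c w ->
  homog_norm c w N ->
  datum_domain c N V ->
  homogeneous_datum c w V ->
  subst_datum c w N V l0 S0 ->
  non_periodic c w V l0 S0 ->
  primitive c w V l0 S0 ->
  strongly_aperiodic c (Omega c w V l0 S0).
Proof.
move=> hcan hN [_ _ _ Vtile] _ [[rm [rp [rm_gt0 rm_lt_rp Vin Vout l0_big]]]].
move=> dil_Gam S0_supp hnp _ om om_Om g Gg om_per.
have [hc _ c2 w12 _] := hcan.
exact: (Omega_aperiodic hc c2 (canonical_bracket_weights hcan) hN Vtile rm_gt0
  rm_lt_rp l0_big Vin Vout dil_Gam S0_supp hnp w12 om_Om Gg om_per).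
Qed.
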